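(* The functions $g_k(z)=\sum_{j=0}^{\infty}\frac{1}{(j+1)^k}z^j$, $k\in\mathbb{N}$ ($k\geq1$), span a dense subspace of $H^2$.
   Context: $H^2$ denotes the Hardy space of analytic functions $f(z)=\sum_{j\ge0}\hat f(j)z^j$ on the open unit disk with $\|f\|^2=\sum_{j}|\hat f(j)|^2<\infty$. *)

From Stdlib Require Import Reals.
From Coquelicot Require Export Coquelicot.
Open Scope R_scope.

(* An element of H^2 is identified with its Taylor coefficient sequence
   f : nat -> C (f j = \hat f(j)); membership = square summability. *)
Definition in_H2 (f : nat -> C) : Prop :=
  ex_series (fun j => (Cmod (f j)) ^ 2).

Definition H2_norm (f : nat -> C) : R :=
  sqrt (Series (fun j => (Cmod (f j)) ^ 2)).

Definition g (k : nat) (j : nat) : C := RtoC (/ (INR (j + 1)) ^ k).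

Fixpoint lincomb (c : nat -> C) (N : nat) (j : nat) : C :=
  match N with
  | O => RtoC 0
  | S n => Cplus (lincomb c n j) (Cmult (c (S n)) (g (S n) j))
  end.

From Stdlib Require Import Reals Lia Lra.
From Coquelicot Require Import Coquelicot.
Open Scope R_scope.

(* Dropping the first n coefficients of g_k costs only the basis vectors e_p, p < n, and
   after rescaling by (n+1)^k what is left has coefficients ((n+1)/(j+1))^k for j >= n.
   This tends to e_n in H^2 as k grows, since for j > n it is at most
   ((n+1)/(n+2))^(k-1) times the square-summable sequence (n+1)/(j+1).  By strong
   induction on n every e_n lies in the closed span of the g_k, and hence so does every
   f in H^2, as the limit of its truncations. *)

Lemma Series_0 : Series (fun _ => 0) = 0.
Proof.
  rewrite (Series_ext _ (fun _ => 0 * 0)) by (intros; ring).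
  rewrite (Series_scal_l 0 (fun _ => 0)); ring.
Qed.

Lemma ex_series_0 : ex_series (fun _ : nat => 0).
Proof.
  exists 0. apply (filterlim_ext (fun _ => 0)).
  - intros n. symmetry. apply (sum_n_m_const_zero (G := R_AbelianMonoid)).
  - apply filterlim_const.
Qed.

Lemma sum_n_telescope_inv (n : nat) :
  sum_n (fun j => / (INR j + 1) - / (INR j + 2)) n = 1 - / (INR n + 2).
Proof.
  induction n as [|n IH].
  - rewrite sum_O; simpl; field.
  - rewrite sum_Sn, IH, S_INR. pose proof (pos_INR n).
    unfold plus; simpl. field; lra.
Qed.

Lemma ex_series_inv_sq : ex_series (fun j => / (INR j + 1) ^ 2).
Proof.
  (* 1/(j+1)^2 <= 2 (1/(j+1) - 1/(j+2)), and the right-hand side telescopes. *)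
  set (t := fun j => / (INR j + 1) - / (INR j + 2)).
  assert (Ht : ex_series t).
  { assert (Hlim : is_lim_seq (sum_n t) 1); [|exact (ex_intro _ 1 Hlim)].
    apply (is_lim_seq_ext (fun n => 1 - / (INR n + 2))).
    - intros n; symmetry; apply sum_n_telescope_inv.
    - replace (Finite 1) with (Finite (1 - 0)) by (f_equal; ring).
      apply is_lim_seq_minus'; [apply is_lim_seq_const|].
      assert (Hinf : is_lim_seq (fun n => INR n + 2) p_infty).
      { apply (is_lim_seq_plus _ _ p_infty 2 p_infty);
          [apply is_lim_seq_INR | apply is_lim_seq_const | reflexivity]. }
      exact (is_lim_seq_inv _ _ Hinf ltac:(discriminate)). }
  apply (@ex_series_le R_AbsRing R_CompleteNormedModule _ (fun j => 2 * t j));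
    [|exact (ex_series_scal_l 2 t Ht)].
  intros j. change (Rabs (/ (INR j + 1) ^ 2) <= 2 * t j). unfold t.
  pose proof (pos_INR j) as Hj.
  rewrite Rabs_pos_eq by (apply Rlt_le, Rinv_0_lt_compat, pow_lt; lra).
  assert (2 * (/ (INR j + 1) - / (INR j + 2)) - / (INR j + 1) ^ 2
          = INR j / ((INR j + 1) ^ 2 * (INR j + 2))) by (field; lra).
  assert (0 <= INR j / ((INR j + 1) ^ 2 * (INR j + 2))).
  { apply Rdiv_le_0_compat; [lra|]. apply Rmult_lt_0_compat; [apply pow_lt|]; lra. }
  lra.
Qed.

Lemma pow_geom_mul_lt (r C eps : R) :
  0 <= r < 1 -> 0 < eps -> exists M : nat, r ^ M * C < eps.
Proof.
  intros Hr Heps. pose proof (Rabs_pos C). pose proof (Rle_abs C).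
  destruct (pow_lt_1_zero r ltac:(rewrite Rabs_pos_eq; lra) (eps / (Rabs C + 1)))
    as [M HM]; [apply Rdiv_lt_0_compat; lra|].
  exists M. specialize (HM M (le_n M)).
  rewrite Rabs_pos_eq in HM by (apply pow_le; lra).
  pose proof (pow_le r M (proj1 Hr)).
  assert (eps / (Rabs C + 1) * (Rabs C + 1) = eps) by (field; lra).
  nra.
Qed.

Lemma succ_ratio_bounds (n : nat) : 0 <= (INR n + 1) / (INR n + 2) < 1.
Proof.
  pose proof (pos_INR n).
  split; [apply Rlt_le, Rdiv_lt_0_compat; lra|].
  apply Rmult_lt_reg_r with (INR n + 2); [lra|].
  unfold Rdiv. rewrite Rmult_assoc, Rinv_l; lra.
Qed.

Lemma pow_succ_sq_le (q r : R) (M : nat) :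
  0 <= q <= r -> r <= 1 -> (q ^ S M) ^ 2 <= r ^ M * q ^ 2.
Proof.
  intros Hq Hr.
  assert (H0 : 0 <= q ^ M) by (apply pow_le; lra).
  assert (Hqr : q ^ M <= r ^ M) by (apply pow_incr; lra).
  assert (H1 : q ^ M <= 1) by (rewrite <- (pow1 M); apply pow_incr; lra).
  pose proof (pow2_ge_0 q).
  replace ((q ^ S M) ^ 2) with (q ^ M * q ^ M * q ^ 2) by (simpl; ring).
  apply Rmult_le_compat_r; [lra|]. nra.
Qed.

Lemma Cmod_plus_sq_le (a b : C) : Cmod (a + b) ^ 2 <= 2 * Cmod a ^ 2 + 2 * Cmod b ^ 2.
Proof.
  pose proof (Cmod_triangle a b). pose proof (Cmod_ge_0 a). pose proof (Cmod_ge_0 b).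
  apply (Rle_trans _ ((Cmod a + Cmod b) ^ 2)).
  - apply pow_incr. pose proof (Cmod_ge_0 (a + b)). lra.
  - pose proof (pow2_ge_0 (Cmod a - Cmod b)). nra.
Qed.

Lemma Cmod_RtoC_sq (x : R) : Cmod (RtoC x) ^ 2 = x ^ 2.
Proof. now rewrite Cmod_R, pow2_abs. Qed.

Definition sqnorm (d : nat -> C) : R := Series (fun j => Cmod (d j) ^ 2).

Lemma in_H2_0 : in_H2 (fun _ => RtoC 0).
Proof.
  apply (ex_series_ext (fun _ => 0)); [|exact ex_series_0].
  intros j. rewrite Cmod_0. symmetry. apply pow_i. lia.
Qed.

Lemma sqnorm_ge_0 (d : nat -> C) : in_H2 d -> 0 <= sqnorm d.
Proof.
  intros Hd. rewrite <- Series_0. apply Series_le; [|exact Hd].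
  intros j. split; [lra | apply pow2_ge_0].
Qed.

Lemma in_H2_dominated (K : R) (d d' : nat -> C) :
  (forall j, Cmod (d j) ^ 2 <= K * Cmod (d' j) ^ 2) -> in_H2 d' ->
  in_H2 d /\ sqnorm d <= K * sqnorm d'.
Proof.
  intros Hle Hd'.
  assert (HK : ex_series (fun j => K * Cmod (d' j) ^ 2)) by exact (ex_series_scal_l K _ Hd').
  split.
  - refine (@ex_series_le R_AbsRing R_CompleteNormedModule _ _ _ HK).
    intros j. change (Rabs (Cmod (d j) ^ 2) <= K * Cmod (d' j) ^ 2).
    rewrite Rabs_pos_eq by apply pow2_ge_0. apply Hle.
  - unfold sqnorm. rewrite <- Series_scal_l. apply Series_le; [|exact HK].
    intros j. split; [apply pow2_ge_0 | apply Hle].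
Qed.

Lemma in_H2_sum (d d1 d2 : nat -> C) :
  (forall j, d j = (d1 j + d2 j)%C) -> in_H2 d1 -> in_H2 d2 ->
  in_H2 d /\ sqnorm d <= 2 * sqnorm d1 + 2 * sqnorm d2.
Proof.
  intros Hd H1 H2.
  assert (E1 : ex_series (fun j => 2 * Cmod (d1 j) ^ 2)) by exact (ex_series_scal_l 2 _ H1).
  assert (E2 : ex_series (fun j => 2 * Cmod (d2 j) ^ 2)) by exact (ex_series_scal_l 2 _ H2).
  set (b := fun j => 2 * Cmod (d1 j) ^ 2 + 2 * Cmod (d2 j) ^ 2).
  assert (Hb : ex_series b) by exact (ex_series_plus _ _ E1 E2).
  assert (Hle : forall j, 0 <= Cmod (d j) ^ 2 <= b j).
  { intros j. rewrite Hd. split; [apply pow2_ge_0 | apply Cmod_plus_sq_le]. }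
  split.
  - refine (@ex_series_le R_AbsRing R_CompleteNormedModule _ _ _ Hb).
    intros j. change (Rabs (Cmod (d j) ^ 2) <= b j).
    rewrite Rabs_pos_eq by apply pow2_ge_0. apply Hle.
  - unfold sqnorm. apply (Rle_trans _ (Series b)); [now apply Series_le|].
    unfold b. rewrite (Series_plus _ _ E1 E2).
    rewrite !Series_scal_l. lra.
Qed.

Lemma in_H2_g1 : in_H2 (g 1).
Proof.
  apply (ex_series_ext (fun j => / (INR j + 1) ^ 2)); [|exact ex_series_inv_sq].
  intros j. unfold g. rewrite Cmod_RtoC_sq, pow_1, plus_INR, pow_inv. reflexivity.
Qed.

Lemma lincomb_plus (c1 c2 : nat -> C) (N j : nat) :
  lincomb (fun k => c1 k + c2 k)%C N j = (lincomb c1 N j + lincomb c2 N j)%C.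
Proof. induction N as [|N IH]; simpl; [|rewrite IH]; ring. Qed.

Lemma lincomb_scal (a : C) (c : nat -> C) (N j : nat) :
  lincomb (fun k => a * c k)%C N j = (a * lincomb c N j)%C.
Proof. induction N as [|N IH]; simpl; [|rewrite IH]; ring. Qed.

Lemma lincomb_ext (c c' : nat -> C) (N j : nat) :
  (forall k, (k <= N)%nat -> c k = c' k) -> lincomb c N j = lincomb c' N j.
Proof.
  induction N as [|N IH]; intros Hc; simpl; [reflexivity|].
  rewrite IH by (intros; apply Hc; lia). rewrite Hc by lia. reflexivity.
Qed.

Lemma lincomb_pad (c : nat -> C) (N M j : nat) :
  lincomb (fun k => if (k <=? N)%nat then c k else RtoC 0) (N + M) j = lincomb c N j.
Proof.
  induction M as [|M IH].
  - rewrite Nat.add_0_r. apply lincomb_ext. intros k Hk.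
    now apply Nat.leb_le in Hk as ->.
  - rewrite Nat.add_succ_r. cbn [lincomb]. rewrite IH.
    replace (S (N + M) <=? N)%nat with false by (symmetry; apply Nat.leb_gt; lia). ring.
Qed.

Definition sqdist_lt (u v : nat -> C) (eps : R) : Prop :=
  in_H2 (fun j => u j - v j)%C /\ sqnorm (fun j => u j - v j)%C < eps.

Lemma sqdist_lt_split (u v u1 v1 u2 v2 : nat -> C) (e1 e2 : R) :
  (forall j, (u j - v j = (u1 j - v1 j) + (u2 j - v2 j))%C) ->
  sqdist_lt u1 v1 e1 -> sqdist_lt u2 v2 e2 -> sqdist_lt u v (2 * e1 + 2 * e2).
Proof.
  intros Huv [H1 S1] [H2 S2].
  destruct (in_H2_sum _ _ _ Huv H1 H2) as [Hd Sd]. split; [exact Hd | lra].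
Qed.

Definition in_closed_span (v : nat -> C) : Prop :=
  forall eps, 0 < eps -> exists N c, sqdist_lt v (lincomb c N) eps.

Lemma in_closed_span_ext (u v : nat -> C) :
  (forall j, u j = v j) -> in_closed_span u -> in_closed_span v.
Proof.
  intros Huv Hu eps Heps. destruct (Hu eps Heps) as (N & c & Hd & Sd).
  exists N, c.
  assert (E : forall j, Cmod (u j - lincomb c N j)%C ^ 2 = Cmod (v j - lincomb c N j)%C ^ 2)
    by (intros j; now rewrite Huv).
  split; [exact (ex_series_ext _ _ E Hd) |].
  unfold sqnorm. now rewrite <- (Series_ext _ _ E).
Qed.

Lemma in_closed_span_lincomb (c : nat -> C) (N : nat) : in_closed_span (lincomb c N).
Proof.
  intros eps Heps. exists N, c.
  assert (Hle : forall j, Cmod (lincomb c N j - lincomb c N j)%C ^ 2 <= 0 * Cmod (RtoC 0) ^ 2).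
  { intros j. replace (lincomb c N j - lincomb c N j)%C with (RtoC 0) by ring.
    rewrite Cmod_0. simpl. lra. }
  destruct (in_H2_dominated _ _ (fun _ => RtoC 0) Hle in_H2_0) as [Hd Sd].
  split; [exact Hd | lra].
Qed.

Lemma in_closed_span_limit (v : nat -> C) :
  (forall eps, 0 < eps -> exists u, in_closed_span u /\ sqdist_lt v u eps) ->
  in_closed_span v.
Proof.
  intros Hv eps Heps.
  destruct (Hv (eps / 4)) as (u & Hu & Hvu); [lra|].
  destruct (Hu (eps / 4)) as (N & c & Huc); [lra|].
  exists N, c. replace eps with (2 * (eps / 4) + 2 * (eps / 4)) by field.
  refine (sqdist_lt_split _ _ _ _ _ _ _ _ _ Hvu Huc). intros j; ring.
Qed.

Lemma in_closed_span_plus (u v : nat -> C) :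
  in_closed_span u -> in_closed_span v -> in_closed_span (fun j => u j + v j)%C.
Proof.
  intros Hu Hv eps Heps.
  destruct (Hu (eps / 4)) as (N1 & c1 & H1); [lra|].
  destruct (Hv (eps / 4)) as (N2 & c2 & H2); [lra|].
  exists (N1 + N2)%nat, (fun k => (if (k <=? N1)%nat then c1 k else RtoC 0)
                                 + (if (k <=? N2)%nat then c2 k else RtoC 0))%C.
  replace eps with (2 * (eps / 4) + 2 * (eps / 4)) by field.
  refine (sqdist_lt_split _ _ _ _ _ _ _ _ _ H1 H2).
  intros j. rewrite lincomb_plus, lincomb_pad, Nat.add_comm, lincomb_pad. ring.
Qed.

Lemma in_closed_span_scal (a : C) (u : nat -> C) :
  in_closed_span u -> in_closed_span (fun j => a * u j)%C.
Proof.
  intros Hu eps Heps.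
  set (K := Cmod a ^ 2). assert (HK : 0 <= K) by apply pow2_ge_0.
  destruct (Hu (eps / (K + 1))) as (N & c & Hd & Sd); [apply Rdiv_lt_0_compat; lra|].
  exists N, (fun k => a * c k)%C.
  assert (Hle : forall j, Cmod (a * u j - lincomb (fun k => a * c k)%C N j)%C ^ 2
                          <= K * Cmod (u j - lincomb c N j)%C ^ 2).
  { intros j. rewrite lincomb_scal.
    replace (a * u j - a * lincomb c N j)%C with (a * (u j - lincomb c N j))%C by ring.
    rewrite Cmod_mult, Rpow_mult_distr. apply Rle_refl. }
  destruct (in_H2_dominated _ _ _ Hle Hd) as [Ha Sa]. split; [exact Ha|].
  assert (eps - K * (eps / (K + 1)) = eps / (K + 1)) by (field; lra).
  assert (0 < eps / (K + 1)) by (apply Rdiv_lt_0_compat; lra).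
  nra.
Qed.

Lemma in_closed_span_g (k : nat) : (1 <= k)%nat -> in_closed_span (g k).
Proof.
  intros Hk. destruct k as [|m]; [lia|].
  set (one := fun _ : nat => RtoC 1).
  apply (in_closed_span_ext (fun j => lincomb one (S m) j + RtoC (-1) * lincomb one m j)%C).
  - intros j. cbn [lincomb]. unfold one. ring.
  - apply in_closed_span_plus; [|apply in_closed_span_scal]; apply in_closed_span_lincomb.
Qed.

Definition ebasis (n j : nat) : C := if (j =? n)%nat then RtoC 1 else RtoC 0.

Definition trunc (a : nat -> C) (n j : nat) : C := if (j <? n)%nat then a j else RtoC 0.

Definition drop (a : nat -> C) (n j : nat) : C := if (j <? n)%nat then RtoC 0 else a j.

Lemma in_closed_span_trunc (a : nat -> C) (n : nat) :
  (forall p, (p < n)%nat -> in_closed_span (ebasis p)) -> in_closed_span (trunc a n).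
Proof.
  induction n as [|n IH]; intros He.
  - apply (in_closed_span_ext (lincomb a 0)); [reflexivity | apply in_closed_span_lincomb].
  - apply (in_closed_span_ext (fun j => trunc a n j + a n * ebasis n j)%C).
    + intros j. unfold trunc, ebasis.
      destruct (Nat.ltb_spec j n), (Nat.ltb_spec j (S n)), (Nat.eqb_spec j n);
        try lia; subst; ring.
    + apply in_closed_span_plus; [apply IH; intros; apply He; lia|].
      apply in_closed_span_scal, He. lia.
Qed.

Lemma in_closed_span_drop (a : nat -> C) (n : nat) :
  in_closed_span a -> (forall p, (p < n)%nat -> in_closed_span (ebasis p)) ->
  in_closed_span (drop a n).
Proof.
  intros Ha He.
  apply (in_closed_span_ext (fun j => a j + RtoC (-1) * trunc a n j)%C).
  - intros j. unfold drop, trunc. destruct (j <? n)%nat; ring.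
  - apply in_closed_span_plus; [exact Ha|]. now apply in_closed_span_scal, in_closed_span_trunc.
Qed.

Lemma sqnorm_ebasis_sub_scaled_tail (n M : nat) :
  let d := fun j => (ebasis n j - RtoC ((INR n + 1) ^ S M) * drop (g (S M)) n j)%C in
  in_H2 d /\
  sqnorm d <= ((INR n + 1) / (INR n + 2)) ^ M * (INR n + 1) ^ 2 * sqnorm (g 1).
Proof.
  intros d. pose proof (pos_INR n) as Hn.
  assert (Hd : forall j, d j =
            RtoC (if (n <? j)%nat then - ((INR n + 1) / (INR j + 1)) ^ S M else 0)).
  { intros j. pose proof (pos_INR j).
    unfold d, ebasis, drop, g. rewrite plus_INR. simpl INR.
    destruct (Nat.ltb_spec n j), (Nat.eqb_spec j n), (Nat.ltb_spec j n); try lia;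
      try subst j; rewrite <- RtoC_mult, <- RtoC_minus; f_equal.
    - unfold Rdiv. rewrite Rpow_mult_distr, pow_inv. ring.
    - rewrite Rinv_r by (apply pow_nonzero; lra). ring.
    - ring. }
  apply in_H2_dominated; [|exact in_H2_g1].
  pose proof (succ_ratio_bounds n) as Hr.
  set (r := (INR n + 1) / (INR n + 2)) in *.
  intros j. rewrite Hd. unfold g. rewrite !Cmod_RtoC_sq, pow_1, plus_INR. simpl INR.
  pose proof (pos_INR j).
  destruct (Nat.ltb_spec n j) as [Hj|Hj].
  - set (q := (INR n + 1) / (INR j + 1)).
    assert (Hjn : INR n + 2 <= INR j + 1).
    { apply le_INR in Hj. rewrite S_INR in Hj. lra. }
    assert (Hq : 0 <= q <= r).
    { unfold q, r, Rdiv. split; [apply Rlt_le, Rdiv_lt_0_compat; lra|].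
      apply Rmult_le_compat_l; [lra|]. apply Rinv_le_contravar; lra. }
    replace (r ^ M * (INR n + 1) ^ 2 * (/ (INR j + 1)) ^ 2) with (r ^ M * q ^ 2)
      by (unfold q, Rdiv; ring).
    replace ((- q ^ S M) ^ 2) with ((q ^ S M) ^ 2) by ring.
    apply pow_succ_sq_le; lra.
  - rewrite pow_i by lia.
    apply Rmult_le_pos; [apply Rmult_le_pos; [apply pow_le|]|]; try apply pow2_ge_0; lra.
Qed.

Lemma in_closed_span_ebasis (n : nat) : in_closed_span (ebasis n).
Proof.
  induction n as [n IH] using (well_founded_induction Wf_nat.lt_wf).
  apply in_closed_span_limit. intros eps Heps.
  destruct (pow_geom_mul_lt _ ((INR n + 1) ^ 2 * sqnorm (g 1)) _ (succ_ratio_bounds n) Heps)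
    as [M HM].
  exists (fun j => RtoC ((INR n + 1) ^ S M) * drop (g (S M)) n j)%C. split.
  - apply in_closed_span_scal, in_closed_span_drop; [apply in_closed_span_g; lia | exact IH].
  - destruct (sqnorm_ebasis_sub_scaled_tail n M) as [Hd Sd].
    split; [exact Hd|]. rewrite Rmult_assoc in Sd. lra.
Qed.

Lemma sqdist_lt_trunc (f : nat -> C) :
  in_H2 f -> forall eps, 0 < eps -> exists N, sqdist_lt f (trunc f N) eps.
Proof.
  intros Hf eps Heps.
  set (a := fun j => Cmod (f j) ^ 2).
  assert (Hlim : is_lim_seq (sum_n a) (Series a)) by exact (Series_correct a Hf).
  apply is_lim_seq_spec in Hlim.
  destruct (Hlim (mkposreal eps Heps)) as [N0 HN0]. specialize (HN0 N0 (le_n N0)).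
  exists (S N0).
  assert (Hd : forall j, Cmod (f j - trunc f (S N0) j)%C ^ 2
                         = if (j <? S N0)%nat then 0 else a j).
  { intros j. unfold trunc, a. destruct (j <? S N0)%nat.
    - replace (f j - f j)%C with (RtoC 0) by ring. rewrite Cmod_0. ring.
    - replace (f j - RtoC 0)%C with (f j) by ring. reflexivity. }
  split.
  - refine (proj1 (in_H2_dominated 1 _ f _ Hf)).
    intros j. rewrite Hd. unfold a. pose proof (pow2_ge_0 (Cmod (f j))).
    destruct (j <? S N0)%nat; lra.
  - unfold sqnorm. rewrite (Series_ext _ _ Hd).
    rewrite (Series_incr_n_aux _ (S N0)).
    2: { intros k Hk. apply Nat.ltb_lt in Hk as ->. reflexivity. }
    rewrite (Series_ext _ (fun k => a (S N0 + k)%nat)).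
    2: { intros k. replace (S N0 + k <? S N0)%nat with false
           by (symmetry; apply Nat.ltb_ge; lia). reflexivity. }
    rewrite (Series_incr_n a (S N0)), <- sum_n_Reals in HN0 by (lia || exact Hf).
    apply Rabs_lt_between in HN0. cbn [pos Nat.pred] in HN0. lra.
Qed.

Lemma in_closed_span_H2 (f : nat -> C) : in_H2 f -> in_closed_span f.
Proof.
  intros Hf. apply in_closed_span_limit. intros eps Heps.
  destruct (sqdist_lt_trunc f Hf eps Heps) as [N HN].
  exists (trunc f N). split; [|exact HN].
  apply in_closed_span_trunc. intros p _. apply in_closed_span_ebasis.
Qed.

Theorem mainTheorem11 :
  forall f : nat -> C, in_H2 f ->
  forall eps : R, 0 < eps ->
  exists (N : nat) (c : nat -> C),
    in_H2 (fun j => Cminus (f j) (lincomb c N j)) /\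
    H2_norm (fun j => Cminus (f j) (lincomb c N j)) < eps.
Proof.
  intros f Hf eps Heps.
  destruct (in_closed_span_H2 f Hf (eps ^ 2) (pow_lt eps 2 Heps)) as (N & c & Hd & Sd).
  exists N, c. split; [exact Hd|].
  unfold H2_norm. rewrite <- (sqrt_pow2 eps) by lra.
  apply sqrt_lt_1; [exact (sqnorm_ge_0 _ Hd) | apply pow2_ge_0 | exact Sd].
Qed.
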